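(* Consider a time series with baseline variables $X$ whose index sets satisfy $\{N,M,C\}\subseteq V$ (outcome process $N$, mediator process $M$, covariate process $C$; $V$ may contain further, e.g. unobserved, processes) and $\{A^D,A^M\}\subseteq W$ (treatment components, baseline). Suppose that for every $t\ge 1$ there is a DAG $D_t$ on the node set $V^t\cup W^t$ such that the $d$-separation Markov property holds in $D_t$ for the distribution of $X$ (the interventional distribution under $do(A^D=a,A^M=a^* )$), and such that the only contemporaneous edges of $D_t$ are of the form $\nu_s^N\to\nu_s^M$ and $\nu_s^N\to\nu_s^C$. Let $D$ be the tailed directed graph on $V\cup W$ containing $i\to j$ (resp. $i\bullet\!\!\to j$) if and only if this edge is in the rolled version of $D_t$ for some $t$. Then, for every lag $k\ge 1$: (i) if $M$ is $\delta$-separated from $A^D$ given $\{A^M,C,N\}$ in $D$, then $A^D$ and $X_k^M$ are conditionally independent given $(A^M,\overline X^M_{k-1},\overline X^C_{k-1},\overline X^N_k)$; (ii) if $C$ is $\delta$-separated from $A^M$ given $\{A^D,M,N\}$ in $D$, then $A^M$ and $X_k^C$ are conditionally independent given $(A^D,\overline X^M_{k},\overline X^C_{k-1},\overline X^N_k)$; (iii) if $N$ is $\delta$-separated from $A^M$ given $\{A^D,C,M\}$ in $D$, then $A^M$ and $X_k^N$ are conditionally independent given $(A^D,\overline X^M_{k-1},\overline X^C_{k-1},\overline X^N_{k-1})$.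
   Context: Time series with baseline variables: $V$, $W$ finite disjoint index sets; $X_0$ is a random vector indexed by $V\cup W$, $X_t$ ($t\ge1$) indexed by $V$. $X_t^A$ is the subvector indexed by $A$, $\overline X_t^A=\{X_s^i:i\in A,s\le t\}$; baseline variables are written simply as $A^D$, $A^M$. In the survival application $X_k^N$ is the indicator of $T>t_k$, and $X^M_k,X^C_k$ are mediator and covariate measurements at time $t_k$. Unrolled node set: $V^t=\bigcup_{i\in V}\{\nu_0^i,\dots,\nu_t^i\}$, $W^t=\{\nu_0^i:i\in W\}$; node $\nu_s^i$ represents $X_s^i$. An edge $\nu_s^i\to\nu_u^j$ is contemporaneous if $s=u$. The $d$-separation Markov property holds in $D_t$ if $d$-separation of node sets $a,b$ by $c$ implies conditional independence of the corresponding variables given those of $c$. Rolled version of a DAG $D_t$: the tailed directed graph with $i\ast\!\!\to j$ if $\nu_s^i\to\nu_u^j$ for some $s\le u$ and $i\bullet\!\!\to j$ iff $\nu_u^i\to\nu_u^j$ for some $u$ (here $i\ast\!\!\to j$ means $i\to j$ or $i\bullet\!\!\to j$, and $i\to j$ is omitted when $i\bullet\!\!\to j$ is present). Standing assumption: whenever $\nu_u^i\to\nu_u^j$ is present, so is $\nu_s^i\to\nu_r^j$ for some $s<r$. $\delta$-separation: for a tailed directed graph $D$ let $D^-$ be the DG with $i\to j$ iff $i\ast\!\!\to j$ in $D$, and $(D^-)^B$ the DG obtained by deleting all edges $i\to j$ with $i\in B$. $B$ is $\delta$-separated from $A$ given $C$ in $D$ if every path (walk without repeated nodes) in $(D^-)^B$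 between $A$ and $B$ contains a noncollider in $C$ or a collider (non-endpoint node with both adjacent edges pointing into it) not in $\mathrm{an}(C)\cup C$, ancestors taken in $D^-$. *)

From HB Require Import structures.
From mathcomp Require Import all_boot all_order all_algebra.
From mathcomp Require Import all_classical all_reals all_analysis.

Set Implicit Arguments.
Unset Strict Implicit.
Unset Printing Implicit Defensive.

Import Order.TTheory GRing.Theory Num.Theory.
Local Open Scope classical_set_scope.
Local Open Scope ring_scope.

Fixpoint dwalk {T : Type} (e : T -> T -> Prop) (x : T) (p : seq T) : Prop :=
  if p is y :: p' then e x y /\ dwalk e y p' else True.

Definition anc_or_in {T : Type} (e : T -> T -> Prop) (C : set T) : set T :=
  fun x => exists p : seq T, dwalk e x p /\ C (last x p).

(* A path is given by a start node x0 and a sequence of steps (b, y):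
   step number i joins node i and node i+1 of  x0 :: map snd s,
   and b = true means the edge is  node_i -> node_(i+1),
   b = false means the edge is  node_(i+1) -> node_i. *)
Definition pnodes {T : eqType} (x0 : T) (s : seq (bool * T)) : seq T :=
  x0 :: map snd s.

Definition is_path {T : eqType} (e : T -> T -> Prop) (x0 : T)
    (s : seq (bool * T)) : Prop :=
  uniq (pnodes x0 s) /\
  forall i, (i < size s)%N ->
    if (nth (true, x0) s i).1
    then e (nth x0 (pnodes x0 s) i) (nth x0 (pnodes x0 s) i.+1)
    else e (nth x0 (pnodes x0 s) i.+1) (nth x0 (pnodes x0 s) i).

Definition collider_at {T : eqType} (x0 : T) (s : seq (bool * T)) (i : nat)
  : bool :=
  (nth (true, x0) s i.-1).1 && ~~ (nth (true, x0) s i).1.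

Definition blocked {T : eqType} (e_anc : T -> T -> Prop) (C : set T)
    (x0 : T) (s : seq (bool * T)) : Prop :=
  exists2 i, (0 < i < size s)%N &
    if collider_at x0 s i
    then ~ anc_or_in e_anc C (nth x0 (pnodes x0 s) i)
    else C (nth x0 (pnodes x0 s) i).

Definition sep_gen {T : eqType} (e_path e_anc : T -> T -> Prop)
    (A B C : set T) : Prop :=
  forall x0 s, is_path e_path x0 s ->
    (A x0 /\ B (last x0 (map snd s))) \/ (B x0 /\ A (last x0 (map snd s))) ->
    blocked e_anc C x0 s.

Definition dsep {T : eqType} (e : T -> T -> Prop) (A B C : set T) : Prop :=
  sep_gen e e A B C.

(* A tailed directed graph is given by two relations: arr i j  (i -> j) *)
(* and tail i j  (i •-> j).                                            *)

Definition tdg_minus {I : Type} (arr tail : I -> I -> Prop) : I -> I -> Prop :=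
  fun i j => arr i j \/ tail i j.

(* B is delta-separated from A given C in the tailed directed graph
   (arr, tail): paths taken in (D^-)^B, ancestors in D^- *)
Definition delta_sep {I : eqType} (arr tail : I -> I -> Prop)
    (A B C : set I) : Prop :=
  sep_gen (fun i j => tdg_minus arr tail i j /\ ~ B i)
          (tdg_minus arr tail) A B C.

(* Unrolled graphs of a time series.  Node nu_s^i is the pair (i, s).   *)

Definition ts_nodes {I : finType} (V W : {set I}) (t : nat) : set (I * nat) :=
  fun x => ((x.1 \in V) /\ (x.2 <= t)%N) \/ ((x.1 \in W) /\ x.2 = 0%N).

Definition rolled_tail {I : Type} (Dt : I * nat -> I * nat -> Prop)
  : I -> I -> Prop :=
  fun i j => exists u, Dt (i, u) (j, u).

Definition rolled_arr {I : Type} (Dt : I * nat -> I * nat -> Prop)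
  : I -> I -> Prop :=
  fun i j => (exists s u, (s <= u)%N /\ Dt (i, s) (j, u))
             /\ ~ rolled_tail Dt i j.

Definition past {I : Type} (i : I) (t : nat) : set (I * nat) :=
  fun x => x.1 = i /\ (x.2 <= t)%N.

(* Dt is a DAG on V^t \cup W^t with edges respecting time, whose only
   contemporaneous edges are nu_s^N -> nu_s^M and nu_s^N -> nu_s^C,
   and satisfying the standing assumption on contemporaneous edges. *)
Definition ts_DAG {I : finType} (V W : {set I}) (N M C : I) (t : nat)
    (Dt : I * nat -> I * nat -> Prop) : Prop :=
  [/\ (forall x y, Dt x y -> ts_nodes V W t x /\ ts_nodes V W t y),
      (forall x p, dwalk Dt x p -> p <> [::] -> last x p <> x),
      (forall i j s u, Dt (i, s) (j, u) -> (s <= u)%N),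
      (forall i j s, Dt (i, s) (j, s) -> i = N /\ (j = M \/ j = C)) &
      (forall i j u, Dt (i, u) (j, u) ->
         exists s r, (s < r)%N /\ Dt (i, s) (j, r))].

Definition cond_indep {d : measure_display} {Omega : measurableType d}
    {R : realType} (P : probability Omega R) (G1 G2 G3 : set (set Omega))
  : Prop :=
  forall E, <<s G1 >> E ->
    exists phi : Omega -> R,
      [/\ (forall B : set R, measurable B -> <<s G3 >> (phi @^-1` B)),
          (forall w, 0 <= phi w <= 1) &
          (forall F, <<s G2 `|` G3 >> F ->
             P (E `&` F) = (\int[P]_(w in F) (phi w)%:E)%E)].

Definition gen_events {d : measure_display} {Omega : measurableType d}
    {R : realType} {I : Type} (X : I -> nat -> Omega -> R)
    (a : set (I * nat)) : set (set Omega) :=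
  fun E => exists i s (B : set R),
      [/\ a (i, s), measurable B & E = X i s @^-1` B].

Definition CI {d : measure_display} {Omega : measurableType d}
    {R : realType} {I : Type} (P : probability Omega R)
    (X : I -> nat -> Omega -> R) (a b c : set (I * nat)) : Prop :=
  cond_indep P (gen_events X a) (gen_events X b) (gen_events X c).

Definition dsep_markov {d : measure_display} {Omega : measurableType d}
    {R : realType} {I : finType} (P : probability Omega R)
    (X : I -> nat -> Omega -> R) (V W : {set I}) (t : nat)
    (Dt : I * nat -> I * nat -> Prop) : Prop :=
  forall a b c : set (I * nat),
    a `<=` ts_nodes V W t -> b `<=` ts_nodes V W t -> c `<=` ts_nodes V W t ->
    a `&` b = set0 -> a `&` c = set0 -> b `&` c = set0 ->
    dsep Dt a b c -> CI P X a b c.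

(* Take a path of the unrolled DAG [D_k] between [(A, 0)] and [(B, k)] that is
   open given the conditioning set [c] (the baseline treatment and the pasts of
   [M], [C], [N] up to time [k - 1] or [k]), and forget the time stamps.  A
   non-collider outside [c] cannot carry a conditioning label: such labels are
   unconditioned only at time [k], where the only edges are [N -> M] and
   [N -> C], and these end in childless nodes that are not ancestors of [c].
   A collider that is an ancestor of [c] projects onto an ancestor of the
   conditioning labels, or onto a label with a directed path to [B] avoiding
   them (through an earlier copy of [B] in [c]); in that case the walk is
   rerouted along this path.  Removing loops then yields a path of
   [(D^-)^B] that is open given the labels, against delta-separation.  The
   Markov property turns the resulting d-separation into conditional
   independence. *)

From HB Require Import structures.
From mathcomp Require Import all_boot all_order all_algebra.
From mathcomp Require Import all_classical all_reals all_analysis.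
From mathcomp Require Import zify.
From Stdlib Require Import Classical.
Set Implicit Arguments.
Unset Strict Implicit.
Unset Printing Implicit Defensive.

Local Open Scope classical_set_scope.

Section OrientedWalks.

Variable T : eqType.
Implicit Types (e : T -> T -> Prop) (anC Cs : T -> Prop) (x y : T)
  (s : seq (bool * T)).

Fixpoint owalk e x s : Prop :=
  if s is (b, y) :: s' then (if b then e x y else e y x) /\ owalk e y s'
  else True.

(* [bin] is the direction of the step entering [x] ([None] at the start of
   the walk) and [bo] that of the step leaving it; [anC] plays the role of
   [an(C) \cup C]. *)
Definition open_at anC Cs (bin : option bool) (bo : bool) x : Prop :=
  if bin is Some bi then (if bi && ~~ bo then anC x else ~ Cs x) else True.

Fixpoint open_walk anC Cs (bin : option bool) x s : Prop :=
  if s is (b, y) :: s' then open_at anC Cs bin b x /\ open_walk anC Cs (Some b) y s'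
  else True.

Lemma owalk_nthP e x s (db : bool * T) (d : T) :
  owalk e x s <-> forall i, (i < size s)%N ->
    if (nth db s i).1 then e (nth d (x :: map snd s) i) (nth d (x :: map snd s) i.+1)
    else e (nth d (x :: map snd s) i.+1) (nth d (x :: map snd s) i).
Proof.
elim: s x => [|[b y] s IH] x /=; first by split.
split=> [[Hxy /IH Hs] [|i] //= /Hs //|Hs].
by split; [exact: (Hs 0%N) | apply/IH => i; exact: (Hs i.+1)].
Qed.

Lemma is_pathE e x0 s : is_path e x0 s <-> uniq (pnodes x0 s) /\ owalk e x0 s.
Proof. by rewrite /is_path (owalk_nthP _ _ _ (true, x0) x0). Qed.

Lemma open_walk_nthP anC Cs b0 x s (db : bool * T) (d : T) :
  open_walk anC Cs (Some b0) x s <-> forall i, (i < size s)%N ->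
    open_at anC Cs (Some (nth db ((b0, x) :: s) i).1) (nth db s i).1
      (nth d (x :: map snd s) i).
Proof.
elim: s b0 x => [|[b y] s IH] b0 x /=; first by split.
split=> [[Hx /IH Hs] [|i] //= /Hs //|Hs].
by split; [exact: (Hs 0%N) | apply/IH => i; exact: (Hs i.+1)].
Qed.

Lemma open_walk_blockedN anc Cs x0 s :
  open_walk (anc_or_in anc Cs) Cs None x0 s <-> ~ blocked anc Cs x0 s.
Proof.
have -> : open_walk (anc_or_in anc Cs) Cs None x0 s <->
    forall i, (0 < i < size s)%N -> if collider_at x0 s i
      then anc_or_in anc Cs (nth x0 (pnodes x0 s) i)
      else ~ Cs (nth x0 (pnodes x0 s) i).
  case: s => [|[b y] s] /=; first by split=> // _ i; lia.
  rewrite (open_walk_nthP _ _ _ _ _ (true, x0) x0).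
  by split=> [[_ Hs] [|i] //= /Hs|Hs]; last split=> // i /(Hs i.+1).
split=> [Hs [i Hi]|Hs i Hi]; first by move: (Hs i Hi); case: (collider_at x0 s i).
apply: NNPP => Hn; apply: Hs; exists i => //.
by case: (collider_at x0 s i) Hn => // /NNPP.
Qed.

Fixpoint rev_steps x s : seq (bool * T) :=
  if s is (b, y) :: s' then rcons (rev_steps y s') (~~ b, x) else [::].

Fixpoint last_dir (bin : option bool) s : option bool :=
  if s is (b, _) :: s' then last_dir (Some b) s' else bin.

Lemma owalk_rcons e x s b y : owalk e x (rcons s (b, y)) <->
  owalk e x s /\ (if b then e (last x (map snd s)) y else e y (last x (map snd s))).
Proof. by elim: s x => [|[b1 y1] s IH] x /=; [tauto | rewrite IH; tauto]. Qed.

Lemma open_walk_rcons anC Cs bin x s b y :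
  open_walk anC Cs bin x (rcons s (b, y)) <->
  open_walk anC Cs bin x s /\ open_at anC Cs (last_dir bin s) b (last x (map snd s)).
Proof. by elim: s bin x => [|[b1 y1] s IH] bin x /=; [tauto | rewrite IH; tauto]. Qed.

Lemma last_dir_rcons bin s b y : last_dir bin (rcons s (b, y)) = Some b.
Proof. by elim: s bin => [|[b1 y1] s IH] bin //=. Qed.

Lemma last_rev_steps x s : last (last x (map snd s)) (map snd (rev_steps x s)) = x.
Proof. by elim: s x => [|[b y] s IH] x //=; rewrite map_rcons last_rcons. Qed.

Lemma owalk_rev e x s : owalk e x s -> owalk e (last x (map snd s)) (rev_steps x s).
Proof.
elim: s x => [|[b y] s IH] x //= [Hxy Hs].
by apply/owalk_rcons; split; [exact: IH | rewrite last_rev_steps; case: b Hxy].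
Qed.

Lemma open_walk_rev anC Cs bin x s : open_walk anC Cs bin x s ->
  open_walk anC Cs None (last x (map snd s)) (rev_steps x s).
Proof.
elim: s x bin => [|[b y] s IH] x bin //= [_ Hs].
apply/open_walk_rcons; split; first exact: IH Hs.
rewrite last_rev_steps.
case: s Hs {IH} => [|[b' y'] s] //= [Hy _].
by rewrite last_dir_rcons; case: b Hy; case: b'.
Qed.

Lemma owalk_cat e x s1 s2 : owalk e x (s1 ++ s2) -> owalk e (last x (map snd s1)) s2.
Proof. by elim: s1 x => [|[b y] s1 IH] x //= [_ /IH]. Qed.

Lemma open_walk_cat anC Cs bin x s1 b y s2 :
  open_walk anC Cs bin x (s1 ++ (b, y) :: s2) -> open_walk anC Cs (Some b) y s2.
Proof. by elim: s1 bin x => [|[b1 y1] s1 IH] bin x /= [_ //] /IH. Qed.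

Lemma split_steps x s : x \in map snd s -> exists s1 b s2, s = s1 ++ (b, x) :: s2.
Proof. by case/mapP=> [[b y] /splitPr[s1 s2] /= ->]; exists s1, b, s2. Qed.

Section AncestralClosure.

Variables (e : T -> T -> Prop) (anC Cs : T -> Prop).
Hypothesis anC_pred : forall x y, e x y -> anC y -> anC x.

(* The first backward step after a run of forward steps reaches a collider,
   which is in [anC]; closure carries this back along the forward run. *)
Lemma open_walk_fwd_anc s x y bin :
  owalk e x ((true, y) :: s) -> open_walk anC Cs bin x ((true, y) :: s) ->
  has (fun p => ~~ p.1) ((true, y) :: s) -> anC x.
Proof.
elim: s x y bin => [|[b' y'] s IH] x y bin //= [Exy Hs] [_ Hok] Hhas.
apply: anC_pred Exy _; case: b' Hs Hok Hhas => /= Hs Hok Hhas.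
- exact: (IH y y' (Some true)).
- by case: Hok.
Qed.

Lemma open_walk_shorten s x bin :
  owalk e x s -> open_walk anC Cs bin x s -> ~~ uniq (x :: map snd s) ->
  exists s', [/\ owalk e x s', open_walk anC Cs bin x s',
    last x (map snd s') = last x (map snd s) & (size s' < size s)%N].
Proof.
elim: s x bin => [|[b y] s IH] x bin Hw Hok //=.
rewrite negb_and negbK => /orP[/(@split_steps _ ((b, y) :: s))[s1 [b2 [s2 Es]]]|Hu].
  have Hw' := Hw; have Hok' := Hok; rewrite Es in Hw' Hok'.
  exists s2; split; last 2 first.
  - by move: (congr1 (fun l => last x (map snd l)) Es); rewrite /= map_cat last_cat.
  - by move: (congr1 size Es); rewrite /= size_cat /=; lia.
  - by case: (owalk_cat Hw').
  case: s2 {Es Hw' Hok'} (open_walk_cat Hok') (Es) => [|[b3 z] s3] //= [Hs2 Hrest] Es.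
  split=> //; case: bin Hok => [bi|] //= Hok; move: (Hok.1) Hs2; rewrite /open_at.
  case Hc: (bi && ~~ b3).
    move/andP: Hc => [-> Hb3] /=; case: b Es Hw Hok => //= Es Hw Hok _ _.
    apply: (open_walk_fwd_anc (bin := Some bi)) Hw Hok _.
    by rewrite Es has_cat /= Hb3 !orbT.
  by case: bi Hc {Hok} => /= [/negbFE -> /=|_ Hx _ //]; rewrite andbF.
case: Hw Hok => He Hw [Hx Hok].
have [s' [W1 O1 L1 S1]] := IH y (Some b) Hw Hok Hu.
by exists ((b, y) :: s').
Qed.

Lemma open_walk_uniq s x bin :
  owalk e x s -> open_walk anC Cs bin x s ->
  exists s', [/\ uniq (x :: map snd s'), owalk e x s', open_walk anC Cs bin x s'
    & last x (map snd s') = last x (map snd s)].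
Proof.
elim: {s}(size s).+1 {-2}s (ltnSn (size s)) => // n IH s Hs Hw Hok.
have [Hu|Hu] := boolP (uniq (x :: map snd s)); first by exists s.
have [s' [W1 O1 <- S1]] := open_walk_shorten Hw Hok Hu.
exact: IH (leq_trans S1 (ltnSE Hs)) W1 O1.
Qed.

End AncestralClosure.

Fixpoint dpath_to e Cs (Bs : T -> Prop) x (p : seq T) : Prop :=
  if p is y :: p' then [/\ e x y, ~ Cs x & dpath_to e Cs Bs y p'] else Bs x.

Lemma dpath_to_open e Cs Bs anC p x bi : dpath_to e Cs Bs x p ->
  [/\ owalk e x (map (pair true) p), open_walk anC Cs (Some bi) x (map (pair true) p)
    & Bs (last x (map snd (map (pair true) p)))].
Proof.
elim: p x bi => [|y p IH] x bi //= [Gxy HCx /(IH _ true) [W O B]].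
by rewrite /open_at andbF.
Qed.

(* A collider that reaches [Bs] by a directed path avoiding [Cs] can be used
   to end the walk there. *)
Lemma open_walk_shortcut e Cs Bs anC s x bin :
  owalk e x s -> open_walk (fun z => anC z \/ exists p, dpath_to e Cs Bs z p) Cs bin x s ->
  Bs (last x (map snd s)) ->
  exists s', [/\ owalk e x s', open_walk anC Cs bin x s' & Bs (last x (map snd s'))].
Proof.
elim: s x bin => [|[b y] s IH] x bin /= Hw Hok HB; first by exists [::].
case: Hw Hok => He Hw [Hx Hok].
have [s' [W1 O1 B1]] := IH y (Some b) Hw Hok HB.
have [Hs|Hs] := classic (open_at anC Cs bin b x); first by exists ((b, y) :: s').
move: Hx Hs; rewrite /open_at; case: bin => [bi|] //.
case: (bi && ~~ b) => // -[//|[p /(dpath_to_open anC bi) [W2 O2 B2]]] _.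
by exists (map (pair true) p).
Qed.

Fixpoint dwalk_until e (Ps : T -> Prop) x (q : seq T) : Prop :=
  if q is y :: q' then [/\ ~ Ps x, e x y & dwalk_until e Ps y q'] else Ps x.

Lemma dwalk_until_first e (Ps : T -> Prop) p x :
  dwalk e x p -> Ps (last x p) -> exists q, dwalk_until e Ps x q.
Proof.
elim: p x => [|y p IH] x /=; first by exists [::].
move=> [Exy /IH Hw /Hw [q Hq]].
by have [Px|Px] := classic (Ps x); [exists [::] | exists (y :: q)].
Qed.

Lemma anc_or_in_pred e Cs x y : e x y -> anc_or_in e Cs y -> anc_or_in e Cs x.
Proof. by move=> Exy [p [Hw HC]]; exists (y :: p). Qed.

End OrientedWalks.

Section LabelProjection.

Variables (I : eqType) (Dk : I * nat -> I * nat -> Prop) (Dm : I -> I -> Prop).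
Variables (c : set (I * nat)) (Cs : set I) (Aa Bp : I) (k : nat).

(* Nodes that can occur on a [c]-open path of [Dk] from [(Aa, 0)] to [(Bp, k)]. *)
Let live z := anc_or_in Dk c z \/ (exists w, Dk z w) \/ z = (Aa, 0%N) \/ z = (Bp, k).

Hypothesis edge_label : forall x y, Dk x y -> Dm x.1 y.1.
Hypothesis edge_time : forall x y, Dk x y -> (x.2 <= y.2)%N.
Hypothesis Aa_neq_Bp : Aa <> Bp.
Hypothesis c_label : forall x, c x -> Cs x.1 \/ x.1 = Bp.
Hypothesis c_Bp_early : forall x, c x -> x.1 = Bp -> (x.2 < k)%N.

Lemma target_notin_c : ~ c (Bp, k).
Proof. by move=> /c_Bp_early /(_ erefl); rewrite ltnn. Qed.

Hypothesis parent_label : forall x z, Dk x z -> ~ c x -> live z ->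
  ~ Cs x.1 /\ x.1 <> Bp.
Hypothesis early_parent_label : forall x y, Dk x y -> ~ c x -> (x.2 < k)%N ->
  ~ Cs x.1 /\ x.1 <> Bp.

Let G i j := Dm i j /\ ~ [set Bp] i.

(* A collider of [Dk] that is an ancestor of [c] projects either onto an
   ancestor of [Cs], or (through an earlier copy of [Bp] in [c]) onto a node
   with a directed path to [Bp] in [G] avoiding [Cs]. *)
Let anC j := anc_or_in Dm Cs j \/ exists p, dpath_to G Cs [set Bp] j p.

Let label_steps (s : seq (bool * (I * nat))) := map (fun p => (p.1, p.2.1)) s.

Lemma dwalk_until_label q x : dwalk_until Dk c x q ->
  anc_or_in Dm Cs x.1 \/ ((x.2 < k)%N /\ exists p, dpath_to G Cs [set Bp] x.1 p).
Proof.
elim: q x => [|y q IH] x /=.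
  move=> /[dup] cx /c_label [Hx|Hx]; first by left; exists [::].
  by right; split; [exact: c_Bp_early | exists [::]].
move=> [ncx Exy /IH [Hy|[Hy [p Hp]]]].
  by left; exact: anc_or_in_pred (edge_label Exy) Hy.
have Hx : (x.2 < k)%N := leq_ltn_trans (edge_time Exy) Hy.
have [HCx HBx] := early_parent_label Exy ncx Hx.
by right; split=> //; exists (y.1 :: p); split=> //; split=> //; exact: edge_label.
Qed.

Lemma anc_or_in_label x : anc_or_in Dk c x -> anC x.1.
Proof.
move=> [p [Hw Hl]]; have [q /dwalk_until_label] := dwalk_until_first Hw Hl.
by case=> [|[_]]; [left | right].
Qed.

Lemma live_at s x bin :
  owalk Dk x s -> open_walk (anc_or_in Dk c) c bin x s ->
  (bin = None -> x = (Aa, 0%N)) -> (s = [::] -> x = (Bp, k)) ->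
  (bin = Some false -> exists2 w, Dk x w & live w) -> live x.
Proof.
case: s => [|[b y] s] Hw Hok Hstart Hend Hin; first by do 3 right; exact: Hend.
case: bin Hstart Hok Hin => [bi|] Hstart Hok Hin; last by do 2 right; left; exact: Hstart.
case: Hok => + _; rewrite /open_at; case Hc: (bi && ~~ b) => Hx; first by left.
right; left; case: bi Hc Hin {Hstart Hx} => [/= /negbFE Eb|_ [] // w Hxw _].
  by exists y; rewrite Eb in Hw; case: Hw.
by exists w.
Qed.

Lemma owalk_label s x bin :
  owalk Dk x s -> open_walk (anc_or_in Dk c) c bin x s ->
  (bin = None -> x = (Aa, 0%N)) -> last x (map snd s) = (Bp, k) ->
  (bin = Some false -> exists2 w, Dk x w & live w) ->
  owalk G x.1 (label_steps s) /\ open_walk anC Cs bin x.1 (label_steps s).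
Proof.
elim: s x bin => [|[b y] s IH] x bin Hw Hok Hstart Hlast Hin //.
have Hlx : live x by apply: (live_at Hw Hok Hstart _ Hin).
move: Hw Hok Hlast => /= [Hxy Hw] [Hx Hok] Hlast /=.
have Hiny : Some b = Some false -> exists2 w, Dk y w & live w.
  by case=> Eb; rewrite Eb in Hxy; exists x.
have Hly : live y.
  by apply: (live_at Hw Hok) => // Es; rewrite Es in Hlast.
have [IHw IHo] :
    owalk G y.1 (label_steps s) /\ open_walk anC Cs (Some b) y.1 (label_steps s).
  by apply: IH Hw Hok _ Hlast Hiny.
have Hout : (exists2 w, Dk x w & live w) -> ~ c x -> ~ Cs x.1 /\ x.1 <> Bp.
  by move=> [w Hxw Hlw] ncx; exact: parent_label Hxw ncx Hlw.
have ncy : b = false -> ~ c y.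
  move=> Eb; case: s Hlast Hok {IH IHw IHo Hw Hly} => [|[b' y'] s] /= Hlast.
    by rewrite Hlast => _; exact: target_notin_c.
  by rewrite Eb /open_at /=; case.
do 2 split => //.
- case: b Hxy Hx ncy {Hiny Hok IHo} => Hxy Hx ncy; split; do ?exact: edge_label Hxy.
    case: bin Hstart Hx {Hin} => [bi|/(_ erefl) -> //] _.
    by rewrite /open_at andbF => /Hout; case=> //; exists y.
  exact: (parent_label Hxy (ncy erefl) Hlx).2.
- case: bin Hstart Hx Hin => [bi|] // _; rewrite /open_at.
  case Hc: (bi && ~~ b); first by move=> Hx _; exact: anc_or_in_label.
  move=> Hx Hin.
  apply: (Hout _ Hx).1; case: b Hxy Hc {Hok IHo Hiny ncy} => Hxy; first by exists y.
  by rewrite andbT => Ebi; apply: Hin; rewrite Ebi.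
Qed.

Lemma dsep_of_label_delta_sep :
  sep_gen G Dm [set Aa] [set Bp] Cs -> dsep Dk [set (Aa, 0%N)] [set (Bp, k)] c.
Proof.
move=> Hdelta x0 s /is_pathE [_ Hw] Hends.
apply: NNPP => /open_walk_blockedN Hok.
have [x1 [s1 [W1 O1 E1 L1]]] : exists x1 s1, [/\ owalk Dk x1 s1,
    open_walk (anc_or_in Dk c) c None x1 s1, x1 = (Aa, 0%N)
    & last x1 (map snd s1) = (Bp, k)].
  case: Hends => [[Ha Hb]|[Hb Ha]]; first by exists x0, s.
  exists (last x0 (map snd s)), (rev_steps x0 s).
  by split; [exact: owalk_rev | exact: open_walk_rev Hok | | rewrite last_rev_steps].
have [PW PO] := owalk_label W1 O1 (fun _ => E1) L1 (fun E => ltac:(discriminate)).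
have PL : [set Bp] (last x1.1 (map snd (label_steps s1))).
  by rewrite (_ : map snd _ = map fst (map snd s1)) ?(last_map fst) ?L1 // -!map_comp.
rewrite E1 /= in PW PO PL.
have [s2 [W2 O2 B2]] := open_walk_shortcut PW PO PL.
have anc_pred x y : G x y -> anc_or_in Dm Cs y -> anc_or_in Dm Cs x.
  by case=> Gxy _; exact: anc_or_in_pred.
have [s3 [U3 W3 O3 L3]] := open_walk_uniq anc_pred W2 O2.
apply: (proj1 (open_walk_blockedN _ _ _ _) O3); apply: Hdelta; first exact/is_pathE.
by left; rewrite L3.
Qed.

End LabelProjection.

Section UnrolledDAG.

Variables (I : finType) (V W : {set I}) (N M C : I) (k : nat).
Variable Dk : I * nat -> I * nat -> Prop.
Hypothesis VW_disjoint : forall i, i \in V -> i \notin W.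
Hypotheses (N_V : N \in V) (M_V : M \in V) (C_V : C \in V).
Hypotheses (N_neq_M : N != M) (N_neq_C : N != C) (M_neq_C : M != C).
Hypothesis Dk_DAG : ts_DAG V W N M C k Dk.
Hypothesis k_gt0 : (0 < k)%N.

Lemma W_neq_V i j : i \in W -> j \in V -> i <> j.
Proof. by move=> iW jV Eij; move: (VW_disjoint jV); rewrite -Eij iW. Qed.

Lemma ts_node_W_time j u : j \in W -> ts_nodes V W k (j, u) -> u = 0%N.
Proof. by move=> jW [[/= /VW_disjoint]|[]]; rewrite jW. Qed.

Lemma edge_source_node x y : Dk x y -> ts_nodes V W k x.
Proof. by case: Dk_DAG => Hts _ _ _ _ /Hts []. Qed.

Lemma edge_from_time_k j w : Dk (j, k) w -> [/\ j = N, w.2 = k & w.1 = M \/ w.1 = C].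
Proof.
case: w => j' u; case: Dk_DAG => Hts _ Htime Hcont _ Hd.
have := Htime _ _ _ _ Hd; have [_ [[_ /= Hu]|[_ /= ->]]] := Hts _ _ Hd; last by lia.
move=> Hk; have Eu : u = k by apply/eqP; rewrite eqn_leq Hu Hk.
by subst u; have [-> ?] := Hcont _ _ _ Hd.
Qed.

Lemma childless_time_k z w : z.2 = k -> z.1 <> N -> ~ Dk z w.
Proof. by case: z => j u /= -> ? /edge_from_time_k []. Qed.

Variables (Ab Aa Bp : I) (Cs : set I) (bM bC bN : nat).
Hypotheses (Ab_W : Ab \in W) (Aa_W : Aa \in W) (Aa_neq_Ab : Aa <> Ab).
Hypothesis bM_bounds : (k.-1 <= bM <= k)%N.
Hypothesis bC_bounds : (k.-1 <= bC <= k)%N.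
Hypothesis bN_bounds : (k.-1 <= bN <= k)%N.
Hypothesis bN_early : bN = k.-1 -> [/\ bM = k.-1, bC = k.-1 & Bp = N].
Hypothesis cond_labels : forall j, Cs j \/ j = Bp <-> j = Ab \/ j = M \/ j = C \/ j = N.
Hypothesis Bp_early :
  (Bp = M /\ bM = k.-1) \/ (Bp = C /\ bC = k.-1) \/ (Bp = N /\ bN = k.-1).

Let c := [set (Ab, 0%N)] `|` past M bM `|` past C bC `|` past N bN.

Lemma in_c x : c x <-> x = (Ab, 0%N) \/ (x.1 = M /\ (x.2 <= bM)%N) \/
  (x.1 = C /\ (x.2 <= bC)%N) \/ (x.1 = N /\ (x.2 <= bN)%N).
Proof. by rewrite /c /setU /set1 /past /=; tauto. Qed.

Lemma Bp_V : Bp \in V.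
Proof. by case: Bp_early => [[->]|[[->]|[->]]]. Qed.

Lemma c_Bp_early x : c x -> x.1 = Bp -> (x.2 < k)%N.
Proof.
move: N_neq_M N_neq_C M_neq_C => /eqP ? /eqP ? /eqP ?.
move=> /in_c [->|[[-> Hu]|[[-> Hu]|[-> Hu]]]] EB; first exact: k_gt0.
all: by case: Bp_early => [[? ?]|[[? ?]|[? ?]]]; try congruence; lia.
Qed.

Lemma c_label x : c x -> Cs x.1 \/ x.1 = Bp.
Proof. by move=> /in_c Hx; apply/cond_labels; case: Hx => [->|]; [left | tauto]. Qed.

Lemma not_cond_label j : ~ (j = Ab \/ j = M \/ j = C \/ j = N) -> ~ Cs j /\ j <> Bp.
Proof. by move=> Hj; split=> Hc; apply: Hj; apply/cond_labels; [left | right]. Qed.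

Lemma outside_c x : ts_nodes V W k x -> ~ c x ->
  x.1 = Ab \/ x.1 = M \/ x.1 = C \/ x.1 = N -> x.2 = k /\ (x.1 = N -> bN = k.-1).
Proof.
case: x => j u Hx ncx /= Hj; have Hu : (u <= k)%N by case: Hx => [[_ /= ?]|[_ /= ->]].
case: Hj => [Ej|Hj].
  by subst j; exfalso; apply: ncx; apply/in_c; left; rewrite (ts_node_W_time Ab_W Hx).
have late j' b' : j = j' -> past j' b' `<=` c -> (b' < u)%N.
  by move=> Ej Hc; rewrite ltnNge; apply/negP => Hle; apply: ncx; apply: Hc.
move: bM_bounds bC_bounds bN_bounds => /andP[? ?] /andP[? ?] /andP[? ?].
move: N_neq_M N_neq_C => /eqP ? /eqP ?.
case: Hj => [Ej|[Ej|Ej]].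
- have := late M bM Ej (fun y Hy => or_introl (or_introl (or_intror Hy))).
  by split; [lia | congruence].
- have := late C bC Ej (fun y Hy => or_introl (or_intror Hy)).
  by split; [lia | congruence].
- have := late N bN Ej (fun y Hy => or_intror Hy).
  by split; lia.
Qed.

Lemma early_parent_label x y : Dk x y -> ~ c x -> (x.2 < k)%N -> ~ Cs x.1 /\ x.1 <> Bp.
Proof.
move=> Dxy ncx Hx; apply: not_cond_label => Hj.
have Hts := edge_source_node Dxy.
by have [Ek _] := outside_c Hts ncx Hj; lia.
Qed.

Lemma parent_label x z : Dk x z -> ~ c x ->
  (anc_or_in Dk c z \/ (exists w, Dk z w) \/ z = (Aa, 0%N) \/ z = (Bp, k)) ->
  ~ Cs x.1 /\ x.1 <> Bp.
Proof.
move=> Dxz ncx Hlive; apply: not_cond_label => Hj.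
have Hts := edge_source_node Dxz.
have [Ek HbN] := outside_c Hts ncx Hj.
case: x Dxz {ncx Hts Hj} Ek HbN => j u Dxz /= Eu HbN; subst u.
have [Ej Ez2 Ez1] := edge_from_time_k Dxz; have [EbM EbC EBp] := bN_early (HbN Ej).
have Ez1N : z.1 <> N.
  by case: Ez1 => ->; apply/eqP; rewrite eq_sym ?N_neq_M ?N_neq_C.
have z_childless w : ~ Dk z w by exact: childless_time_k.
case: Hlive => [[[|w p] [/= Hw /in_c Hz]]|[[w /z_childless //]|[Ez|Ez]]].
- case: Hz => [Ez|[[_ ?]|[[_ ?]|[? _]]]] //; try lia.
  by move: Ez2; rewrite Ez /=; lia.
- by case: Hw => /z_childless.
- by move: Ez2; rewrite Ez /=; lia.
- by apply: Ez1N; rewrite Ez EBp.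
Qed.

Lemma dsep_unrolled (Dm : I -> I -> Prop) :
  (forall x y, Dk x y -> Dm x.1 y.1) ->
  sep_gen (fun i j => Dm i j /\ ~ [set Bp] i) Dm [set Aa] [set Bp] Cs ->
  dsep Dk [set (Aa, 0%N)] [set (Bp, k)] c.
Proof.
move=> edge_label; apply: dsep_of_label_delta_sep => //.
- by move=> x y Dxy; case: Dk_DAG => _ _ Htime _ _; case: x y Dxy => ? ? [? ?] /Htime.
- exact: W_neq_V Aa_W Bp_V.
- exact: c_label.
- exact: c_Bp_early.
- exact: parent_label.
- exact: early_parent_label.
Qed.

Lemma CI_of_delta_sep (R : realType) (d : measure_display) (Omega : measurableType d)
    (P : probability Omega R) (X : I -> nat -> Omega -> R) (Dm : I -> I -> Prop) :
  dsep_markov P X V W k Dk -> (forall x y, Dk x y -> Dm x.1 y.1) ->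
  sep_gen (fun i j => Dm i j /\ ~ [set Bp] i) Dm [set Aa] [set Bp] Cs ->
  CI P X [set (Aa, 0%N)] [set (Bp, k)] c.
Proof.
move=> Hmarkov edge_label Hdelta.
have Bp_k_notin_c := target_notin_c c_Bp_early.
have Aa_notin_c : ~ c (Aa, 0%N).
  move=> /in_c [[]|[[/= E _]|[[/= E _]|[/= E _]]]] //; apply: W_neq_V Aa_W _ E => //.
apply: Hmarkov (dsep_unrolled edge_label Hdelta).
- by move=> _ ->; right.
- by move=> _ ->; left; split=> //; exact: Bp_V.
- move=> x /in_c [->|[[Ex ?]|[[Ex ?]|[Ex ?]]]];
    [by right | by left; rewrite Ex; split=> //; lia ..].
- by rewrite set1I memNset // => -[] /(W_neq_V Aa_W Bp_V).
- by rewrite set1I memNset.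
- by rewrite set1I memNset.
Qed.

End UnrolledDAG.

Lemma rolled_edge (I : Type) (Dt : nat -> I * nat -> I * nat -> Prop) t x y :
  (1 <= t)%N -> (forall i j s u, Dt t (i, s) (j, u) -> (s <= u)%N) -> Dt t x y ->
  tdg_minus (fun i j => exists2 t, (1 <= t)%N & rolled_arr (Dt t) i j)
            (fun i j => exists2 t, (1 <= t)%N & rolled_tail (Dt t) i j) x.1 y.1.
Proof.
case: x y => i s [j u] t_gt0 Htime Hd /=.
have [Ht|Ht] := classic (rolled_tail (Dt t) i j); first by right; exists t.
by left; exists t => //; split=> //; exists s, u; split=> //; exact: Htime Hd.
Qed.

Theorem proposition2 (R : realType) (d : measure_display)
  (Omega : measurableType d) (P : probability Omega R)
  (I : finType) (V W : {set I}) (X : I -> nat -> Omega -> R)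
  (N M C AD AM : I) (Dt : nat -> I * nat -> I * nat -> Prop) :
  (forall i, i \in V -> i \notin W) ->
  N \in V -> M \in V -> C \in V -> AD \in W -> AM \in W ->
  N != M -> N != C -> M != C -> AD != AM ->
  (forall i s, ts_nodes V W s (i, s) -> measurable_fun setT (X i s)) ->
  (forall t, (1 <= t)%N -> ts_DAG V W N M C t (Dt t)) ->
  (forall t, (1 <= t)%N -> dsep_markov P X V W t (Dt t)) ->
  let arr := fun i j => exists2 t, (1 <= t)%N & rolled_arr (Dt t) i j in
  let tail := fun i j => exists2 t, (1 <= t)%N & rolled_tail (Dt t) i j in
  forall k, (1 <= k)%N ->
  [/\ delta_sep arr tail [set AD] [set M] ([set AM] `|` [set C] `|` [set N]) ->
        CI P X [set (AD, 0%N)] [set (M, k)]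
          ([set (AM, 0%N)] `|` past M k.-1 `|` past C k.-1 `|` past N k),
      delta_sep arr tail [set AM] [set C] ([set AD] `|` [set M] `|` [set N]) ->
        CI P X [set (AM, 0%N)] [set (C, k)]
          ([set (AD, 0%N)] `|` past M k `|` past C k.-1 `|` past N k) &
      delta_sep arr tail [set AM] [set N] ([set AD] `|` [set C] `|` [set M]) ->
        CI P X [set (AM, 0%N)] [set (N, k)]
          ([set (AD, 0%N)] `|` past M k.-1 `|` past C k.-1 `|` past N k.-1)].
Proof.
move=> VW N_V M_V C_V AD_W AM_W NM NC MC /eqP AD_AM _ DAG markov arr tail k k_gt0.
have rolled x y : Dt k x y -> tdg_minus arr tail x.1 y.1.
  by apply: rolled_edge => //; case: (DAG k k_gt0).
have {}markov := markov k k_gt0.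
split=> Hdelta; apply: (CI_of_delta_sep VW N_V M_V C_V NM NC MC (DAG k k_gt0) k_gt0
  _ _ _ _ _ _ _ _ _ markov rolled Hdelta) => //.
all: by [ congruence | apply/andP; lia | move=> ?; exfalso; lia | tauto
        | move=> j; rewrite /setU /set1 /=; tauto ].
Qed.
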